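(* Let $A_1,A_2\in\mathbb{R}^{m\times n}$ and let $A_1=U_1-V$ and $A_2=U_2-V$ be two proper weak regular splittings of different types (one of type I and the other of type II). Suppose that $\rho(U_1^{\dagger}V)>0$ and $\rho(U_2^{\dagger}V)>0$. If $V\neq 0$ and $A_2^{\dagger}>A_1^{\dagger}\geq 0$, then $\rho(U_1^{\dagger}V)<\rho(U_2^{\dagger}V)<1$.
   Context: $A^{\dagger}$ denotes the Moore–Penrose inverse and $\rho(\cdot)$ the spectral radius. Inequalities between matrices are entrywise; $X>Y$ means every entry of $X-Y$ is positive. A splitting $A=U-V$ is proper if $R(U)=R(A)$ and $N(U)=N(A)$. A proper splitting is a proper weak regular splitting of type I if $U^{\dagger}\geq 0$ and $U^{\dagger}V\geq 0$, and of type II if $U^{\dagger}\geq 0$ and $VU^{\dagger}\geq 0$. *)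

From HB Require Import structures.
From mathcomp Require Import all_boot all_order all_algebra.
From mathcomp Require Import complex.
Set Implicit Arguments. Unset Strict Implicit. Unset Printing Implicit Defensive.
Import Order.TTheory GRing.Theory Num.Theory.
Local Open Scope ring_scope.

Definition mx_nonneg (R : numDomainType) m n (M : 'M[R]_(m, n)) : Prop :=
  forall i j, 0 <= M i j.
Definition mx_gt (R : numDomainType) m n (X Y : 'M[R]_(m, n)) : Prop :=
  forall i j, Y i j < X i j.

Definition is_MP_inverse (R : numDomainType) m n (A : 'M[R]_(m, n))
    (X : 'M[R]_(n, m)) : Prop :=
  [/\ A *m X *m A = A, X *m A *m X = X,
      (A *m X)^T = A *m X & (X *m A)^T = X *m A].

Definition in_range (R : pzRingType) m n (A : 'M[R]_(m, n)) (y : 'cV[R]_m) : Prop :=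
  exists x : 'cV[R]_n, y = A *m x.
Definition in_null (R : pzRingType) m n (A : 'M[R]_(m, n)) (x : 'cV[R]_n) : Prop :=
  A *m x = 0.

Definition proper_splitting (R : pzRingType) m n (A U V : 'M[R]_(m, n)) : Prop :=
  [/\ A = U - V,
      (forall y, in_range U y <-> in_range A y) &
      (forall x, in_null U x <-> in_null A x)].

Definition pwr_splitting_I (R : numDomainType) m n (A U V : 'M[R]_(m, n))
    (Ud : 'M[R]_(n, m)) : Prop :=
  [/\ proper_splitting A U V, is_MP_inverse U Ud,
      mx_nonneg Ud & mx_nonneg (Ud *m V)].
Definition pwr_splitting_II (R : numDomainType) m n (A U V : 'M[R]_(m, n))
    (Ud : 'M[R]_(n, m)) : Prop :=
  [/\ proper_splitting A U V, is_MP_inverse U Ud,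
      mx_nonneg Ud & mx_nonneg (V *m Ud)].

(* Spectral radius of a real square matrix: the largest modulus of the
   complex roots of its characteristic polynomial (0 for the empty matrix). *)
Definition mx_eigenvalues (R : rcfType) n (M : 'M[R]_n) : seq R[i] :=
  projT1 (closed_field_poly_normal
            (char_poly (map_mx (real_complex R) M))).
Definition spectral_radius (R : rcfType) n (M : 'M[R]_n) : R :=
  complex.Re (\big[Num.max/0]_(z <- mx_eigenvalues M) `|z|).

From HB Require Import structures.
From mathcomp Require Import all_boot all_order all_algebra.
From mathcomp Require Import complex polyrcf lra.
Import Order.TTheory GRing.Theory Num.Theory.
Local Open Scope ring_scope.
Set Implicit Arguments. Unset Strict Implicit. Unset Printing Implicit Defensive.

(* The proof rests on a weak Perron-Frobenius theorem: a nonnegative matrix B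
   with rho(B) > 0 has nonnegative left and right eigenvectors for rho(B).
   Since the real closed field need not be complete, there are no Neumann
   series; instead (t - B)^-1 >= 0 is shown for every t > rho(B) directly: it
   holds for large t, and the resolvent identity pushes it leftwards past each
   of the finitely many roots of the adjugate entries of X - B. Dividing that
   adjugate by the largest power of X - rho(B) dividing it and evaluating at
   rho(B) then yields the eigenvector.

   For a proper weak regular splitting A = U - V of type I, a nonnegative left
   eigenvector u of U^+ V for rho = rho(U^+ V) satisfies u U^+ = (1 - rho) u A^+,
   hence rho < 1 and u A^+ V = rho / (1 - rho) u; dually for type II with a
   right eigenvector w of V U^+. Pairing the eigenvectors of the two splittings
   gives mu1 (u A2^+ w) = mu2 (u A1^+ w) with mu_i = rho_i / (1 - rho_i), and
   A2^+ > A1^+ >= 0 forces mu1 < mu2, that is rho1 < rho2. *)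

(** * Nonnegative matrices *)

Lemma mx_neq0_entry (V : nmodType) m n (X : 'M[V]_(m, n)) :
  X != 0 -> exists i j, X i j != 0.
Proof.
move=> X0; have [[i j] /= Xij|X_0] := pickP (fun ij => X ij.1 ij.2 != 0).
  by exists i, j.
case/eqP: X0; apply/matrixP => i j; rewrite mxE.
by move/negbFE/eqP: (X_0 (i, j)).
Qed.

Lemma col_matrixP (T : Type) m n (A B : 'M[T]_(m, n)) :
  (forall j, col j A = col j B) <-> A = B.
Proof.
split=> [eqAB | -> //]; apply/matrixP => i j.
by move/colP/(_ i): (eqAB j); rewrite !mxE.
Qed.

Lemma col_mulmx (R : pzSemiRingType) m n p (A : 'M[R]_(m, n)) (B : 'M_(n, p)) j :
  col j (A *m B) = A *m col j B.
Proof. by rewrite !colE mulmxA. Qed.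

Section NonnegMatrix.
Variable R : numDomainType.

Lemma mx_nonneg_mul m n p (X : 'M[R]_(m, n)) (Y : 'M[R]_(n, p)) :
  mx_nonneg X -> mx_nonneg Y -> mx_nonneg (X *m Y).
Proof. by move=> X0 Y0 i j; rewrite mxE sumr_ge0 // => k _; rewrite mulr_ge0. Qed.

Lemma mx_nonneg_tr m n (X : 'M[R]_(m, n)) : mx_nonneg X -> mx_nonneg X^T.
Proof. by move=> X0 i j; rewrite mxE. Qed.

Lemma mx_nonneg_neq0_gt0 m n (X : 'M[R]_(m, n)) :
  mx_nonneg X -> X != 0 -> exists i j, 0 < X i j.
Proof.
by move=> X0 /mx_neq0_entry[i [j Xij]]; exists i, j; rewrite lt_def Xij X0.
Qed.

Lemma bilinear_gt0 m n (u : 'rV[R]_m) (D : 'M[R]_(m, n)) (w : 'cV[R]_n) :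
  mx_nonneg u -> u != 0 -> mx_nonneg w -> w != 0 -> (forall i j, 0 < D i j) ->
  0 < (u *m D *m w) 0 0.
Proof.
move=> u0 /(mx_nonneg_neq0_gt0 u0)[i0 [i ui]] w0 /(mx_nonneg_neq0_gt0 w0)[j [j0 wj]] D0.
rewrite (ord1 i0) in ui; rewrite (ord1 j0) in wj.
have uD0 : mx_nonneg (u *m D) by apply: mx_nonneg_mul => // ? ?; apply: ltW.
have uDj : 0 < (u *m D) 0 j.
  rewrite mxE (bigD1 i) //= ltr_pwDl ?mulr_gt0 // sumr_ge0 // => l _.
  exact: mulr_ge0 (u0 _ _) (ltW (D0 _ _)).
rewrite mxE (bigD1 j) //= ltr_pwDl ?mulr_gt0 // sumr_ge0 // => l _.
by rewrite mulr_ge0.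
Qed.

Lemma mx_row_sum_le k n (M : 'M[R]_(k, n)) i :
  mx_nonneg M -> \sum_j M i j <= \sum_i \sum_j M i j.
Proof.
move=> M0; rewrite [leRHS](bigD1 i) //= lerDl.
by apply: sumr_ge0 => l _; apply: sumr_ge0.
Qed.

End NonnegMatrix.

(* At a most negative entry x = X i0 j of its column,
   x >= (Q *m X) i0 j >= (\sum_l Q i0 l) * x > x. *)
Lemma substochastic_fixpoint_nonneg (R : realDomainType) k n (X C : 'M[R]_(k, n))
    (Q : 'M[R]_k) :
  mx_nonneg C -> mx_nonneg Q -> (forall i, \sum_j Q i j < 1) ->
  X = C + Q *m X -> mx_nonneg X.
Proof.
move=> C0 Q0 Q_lt1 XE i j; rewrite leNgt; apply/negP => Xij_lt0.
have [i0 _ Xi0_min] := arg_minP (fun i => X i j) (isT : xpredT i).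
have Xi0_lt0 : X i0 j < 0 := le_lt_trans (Xi0_min i isT) Xij_lt0.
have QX_ge : (\sum_l Q i0 l) * X i0 j <= (Q *m X) i0 j.
  rewrite mxE mulr_suml ler_sum // => l _.
  by rewrite ler_wpM2l // Xi0_min.
have QX_gt : X i0 j < (\sum_l Q i0 l) * X i0 j.
  by rewrite -subr_gt0 -{2}[X i0 j]mul1r -mulrBl nmulr_lgt0 // subr_lt0.
have XE0 : X i0 j = C i0 j + (Q *m X) i0 j by rewrite {1}XE mxE.
have := lt_le_trans QX_gt QX_ge; have := C0 i0 j; lra.
Qed.

(** * Spectral radius *)

Lemma bigmax_seq_attained (d : Order.disp_t) (T : orderType d) (I : eqType)
    (s : seq I) (x0 : T) (F : I -> T) :
  (x0 < \big[Order.max/x0]_(i <- s) F i)%O ->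
  exists2 i, i \in s & F i = \big[Order.max/x0]_(i <- s) F i.
Proof.
elim: s => [|a s IHs]; first by rewrite big_nil ltxx.
rewrite big_cons maxElt; case: ifP => [_ /IHs[i si Fi]|_ _].
  by exists i; rewrite ?inE ?si ?orbT.
by exists a; rewrite ?mem_head.
Qed.

Lemma char_poly_trmx (R : comNzRingType) n (A : 'M[R]_n) :
  char_poly A^T = char_poly A.
Proof.
rewrite /char_poly -det_tr; congr (\det _).
by apply/matrixP => i j; rewrite !mxE eq_sym.
Qed.

Lemma eigenvalue_mulmxC (F : fieldType) m n (X : 'M[F]_(m, n)) (Y : 'M_(n, m)) a :
  a != 0 -> eigenvalue (X *m Y) a -> eigenvalue (Y *m X) a.
Proof.
move=> a_neq0 /eigenvalueP[v vXY v_neq0]; apply/eigenvalueP.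
exists (v *m X); first by rewrite mulmxA -(mulmxA v) vXY scalemxAl.
apply: contra_neq v_neq0 => vX0; apply/(scalerI a_neq0).
by rewrite -vXY mulmxA vX0 mul0mx scaler0.
Qed.

Section SpectralRadius.
Variable R : rcfType.
Local Notation cmx B := (map_mx (real_complex R) B).
Local Open Scope complex_scope.

Lemma spectral_radiusE k (B : 'M[R]_k) :
  spectral_radius B = \big[Num.max/0]_(z <- mx_eigenvalues B) complex.Re `|z|.
Proof.
rewrite /spectral_radius; set s := mx_eigenvalues B.
suff -> : \big[Num.max/0]_(z <- s) `|z| = (\big[Num.max/0]_(z <- s) complex.Re `|z|)%:C.
  by [].
elim: s => [|z s IHs]; first by rewrite !big_nil.
have zE : `|z| = (complex.Re `|z|)%:C by rewrite RRe_real ?normr_real.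
by rewrite !big_cons IHs {1}zE !maxElt ltcR; case: ifP.
Qed.

Lemma mem_mx_eigenvalues k (B : 'M[R]_k) z :
  (z \in mx_eigenvalues B) = root (char_poly (cmx B)) z.
Proof.
rewrite /mx_eigenvalues; case: closed_field_poly_normal => s /= ->.
by rewrite (monicP (char_poly_monic _)) scale1r root_prod_XsubC.
Qed.

Lemma spectral_radius_ge0 k (B : 'M[R]_k) : 0 <= spectral_radius B.
Proof. by rewrite spectral_radiusE bigmax_ge_id. Qed.

Lemma root_le_spectral_radius k (B : 'M[R]_k) z :
  root (char_poly (cmx B)) z -> complex.Re `|z| <= spectral_radius B.
Proof. by rewrite -mem_mx_eigenvalues spectral_radiusE => /le_bigmax_seq->. Qed.

Lemma spectral_radius_attained k (B : 'M[R]_k) : 0 < spectral_radius B ->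
  exists2 z, root (char_poly (cmx B)) z & complex.Re `|z| = spectral_radius B.
Proof.
rewrite spectral_radiusE => /bigmax_seq_attained[z zB zE].
by exists z; rewrite -?mem_mx_eigenvalues.
Qed.

Lemma spectral_radius_tr k (B : 'M[R]_k) : spectral_radius B^T = spectral_radius B.
Proof. by rewrite /spectral_radius /mx_eigenvalues -map_trmx char_poly_trmx. Qed.

Lemma spectral_radius_mulC m n (X : 'M[R]_(m, n)) (Y : 'M_(n, m)) :
  spectral_radius (X *m Y) = spectral_radius (Y *m X).
Proof.
wlog suff: m n X Y / spectral_radius (X *m Y) <= spectral_radius (Y *m X).
  by move=> le_rho; apply/le_anti; rewrite !le_rho.
rewrite [leLHS]spectral_radiusE big_seq bigmax_le ?spectral_radius_ge0 // => z.
rewrite mem_mx_eigenvalues; have [->|z_neq0] := eqVneq z 0.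
  by rewrite normr0 spectral_radius_ge0.
rewrite -!eigenvalue_root_char !map_mxM => /(eigenvalue_mulmxC z_neq0).
by rewrite -map_mxM eigenvalue_root_char => /root_le_spectral_radius.
Qed.

Lemma spectral_radius_dim_gt0 k (B : 'M[R]_k) : 0 < spectral_radius B -> (0 < k)%N.
Proof.
case/spectral_radius_attained => z; case: k B => // B.
have /size_poly1P[c c_neq0 ->] : size (char_poly (cmx B)) == 1%N.
  by rewrite size_char_poly.
by rewrite /root hornerC (negPf c_neq0).
Qed.

Lemma real_root_le_spectral_radius k (B : 'M[R]_k) (y : R) :
  root (char_poly B) y -> `|y| <= spectral_radius B.
Proof.
move=> /(rmorph_root (real_complex R)); rewrite map_char_poly.
move=> /root_le_spectral_radius; congr (_ <= _).
by rewrite normc_def /= expr0n /= addr0 sqrtr_sqr.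
Qed.

Lemma char_poly_gt0 k (B : 'M[R]_k) t :
  spectral_radius B < t -> 0 < (char_poly B).[t].
Proof.
move=> rho_lt_t; rewrite -sgr_cp0 (@sgp_pinftyP _ t) ?in_itv /= ?lexx //.
  by rewrite /sgp_pinfty (monicP (char_poly_monic B)) sgr1.
move=> y; rewrite in_itv /= andbT => t_le_y; apply/negP.
move/real_root_le_spectral_radius => /(le_trans (ler_norm y)).
by apply/negP; rewrite -ltNge (lt_le_trans rho_lt_t).
Qed.

End SpectralRadius.

(** * Perron-Frobenius theorem *)

Lemma resolvent_eq (R : comUnitRingType) k (B : 'M[R]_k) s t :
  s%:M - B \in unitmx -> t%:M - B \in unitmx ->
  invmx (t%:M - B) = invmx (s%:M - B) + (s - t) *: (invmx (s%:M - B) *m invmx (t%:M - B)).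
Proof.
move=> Us Ut; have shiftE : (s - t)%:M = (s%:M - B) - (t%:M - B) :> 'M_k.
  by rewrite opprB addrA subrK raddfB.
rewrite scalemxAr -mul_scalar_mx shiftE mulmxA mulmxBr mulmxBl mulVmx // mul1mx.
by rewrite -mulmxA mulmxV // mulmx1 addrCA subrr addr0.
Qed.

Section Resolvent.
Variables (R : rcfType) (k : nat) (B : 'M[R]_k).
Hypothesis B0 : mx_nonneg B.
Local Notation r := (spectral_radius B).
Local Notation adjp := (\adj (char_poly_mx B)).

Lemma horner_char_poly_mx t : map_mx (horner_eval t) (char_poly_mx B) = t%:M - B.
Proof.
apply/matrixP => i j; rewrite !mxE /horner_eval.
by rewrite hornerD hornerN hornerMn hornerX hornerC.
Qed.

Lemma horner_adj_char_poly_mx t i j : (adjp i j).[t] = \adj (t%:M - B) i j.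
Proof. by rewrite -horner_char_poly_mx -map_mx_adj [RHS]mxE. Qed.

Lemma horner_char_poly t : (char_poly B).[t] = \det (t%:M - B).
Proof. by rewrite -horner_char_poly_mx det_map_mx. Qed.

Lemma shift_unitmx t : r < t -> t%:M - B \in unitmx.
Proof. by move=> rt; rewrite unitmxE -horner_char_poly unitfE gt_eqF ?char_poly_gt0. Qed.

Lemma resolvent_ge0E t i j :
  r < t -> (0 <= invmx (t%:M - B) i j) = (0 <= (adjp i j).[t]).
Proof.
move=> rt; rewrite /invmx shift_unitmx // mxE -horner_char_poly horner_adj_char_poly_mx.
by rewrite pmulr_rge0 // invr_gt0 char_poly_gt0.
Qed.

Lemma resolvent_nonneg_large :
  exists2 T, r < T & forall t, T <= t -> mx_nonneg (invmx (t%:M - B)).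
Proof.
pose S := \sum_i \sum_j B i j.
have S0 : 0 <= S by apply/sumr_ge0 => i _; apply/sumr_ge0.
have r0 := spectral_radius_ge0 B.
exists (r + S + 1); first lra.
move=> t Tt.
have t_gt0 : 0 < t by lra.
have /shift_unitmx Ut : r < t by lra.
apply: (substochastic_fixpoint_nonneg (C := t^-1%:M) (Q := t^-1 *: B)).
- by move=> i j; rewrite mxE mulrn_wge0 // invr_ge0 ltW.
- by move=> i j; rewrite mxE mulr_ge0 // invr_ge0 ltW.
- move=> i; under eq_bigr do rewrite mxE.
  rewrite -mulr_sumr ltr_pdivrMl // mulr1 (le_lt_trans (mx_row_sum_le i B0)) // -/S.
  lra.
- rewrite -scalemxAl -[t^-1%:M]scalemx1 -scalerDr; apply: (scalerI (lt0r_neq0 t_gt0)).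
  rewrite scalerA divff ?gt_eqF // scale1r -mul_scalar_mx.
  by rewrite -[1%:M](mulmxV Ut) mulmxBl subrK.
Qed.

Lemma resolvent_nonneg_step s : r < s -> mx_nonneg (invmx (s%:M - B)) ->
  exists2 d, 0 < d & forall t, r < t -> s - d <= t -> t <= s ->
    mx_nonneg (invmx (t%:M - B)).
Proof.
move=> rs Rs0; pose S := \sum_i \sum_j invmx (s%:M - B) i j.
have S0 : 0 <= S by apply/sumr_ge0 => i _; apply/sumr_ge0.
have d_gt0 : 0 < (S + 1)^-1 by rewrite invr_gt0; lra.
exists (S + 1)^-1 => // t rt st ts.
apply: (substochastic_fixpoint_nonneg (C := invmx (s%:M - B))
         (Q := (s - t) *: invmx (s%:M - B))) => //.
- by move=> i j; rewrite mxE mulr_ge0 // subr_ge0.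
- move=> i; under eq_bigr do rewrite mxE.
  rewrite -mulr_sumr; apply: (@le_lt_trans _ _ ((S + 1)^-1 * S)).
    by rewrite ler_pM ?subr_ge0 ?sumr_ge0 ?mx_row_sum_le //; lra.
  by rewrite mulrC ltr_pdivrMr; lra.
- by rewrite -scalemxAl -(resolvent_eq (shift_unitmx rs) (shift_unitmx rt)).
Qed.

Local Notation adj_prod :=
  (\prod_(ij : 'I_k * 'I_k | adjp ij.1 ij.2 != 0) adjp ij.1 ij.2).

Lemma adj_prod_neq0 : adj_prod != 0.
Proof. by rewrite prodf_seq_neq0; apply/allP => ij _; apply/implyP. Qed.

Lemma root_adj_prod i j x : adjp i j != 0 -> root (adjp i j) x -> root adj_prod x.
Proof.
move=> p_neq0; rewrite /root horner_prod (bigD1 (i, j)) //= => /eqP->.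
by rewrite mul0r.
Qed.

(* Nonnegativity extends a little to the left of b, and the adjugate entries
   cannot change sign on a root-free interval. *)
Lemma resolvent_nonneg_interval a b : r < a -> a <= b ->
  mx_nonneg (invmx (b%:M - B)) -> {in `]a, b[, forall x, ~~ root adj_prod x} ->
  mx_nonneg (invmx (a%:M - B)).
Proof.
move=> ra ab Rb0 noroot.
have [d d_gt0 Rd0] := resolvent_nonneg_step (lt_le_trans ra ab) Rb0.
have [bd_le_a|a_lt_bd] := lerP (b - d) a; first exact: Rd0.
have rbd : r < b - d by lra.
have bd_in : b - d \in `]a, b[ by rewrite in_itv /=; apply/andP; split; lra.
have Rbd0 : mx_nonneg (invmx ((b - d)%:M - B)) by apply: Rd0 => //; lra.
move=> i j; rewrite resolvent_ge0E //.
have [->|p_neq0] := eqVneq (adjp i j) 0; first by rewrite horner0.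
have p_bd : 0 < (adjp i j).[b - d].
  rewrite lt_def -resolvent_ge0E // Rbd0 andbT.
  by apply: contraNneq (noroot _ bd_in) => p0; apply: (root_adj_prod p_neq0); apply/eqP.
rewrite leNgt; apply/negP => p_a.
have [z z_in /(root_adj_prod p_neq0) z_root] :=
  poly_ivtoo (ltW a_lt_bd) (etrans (pmulr_llt0 _ p_bd) p_a).
have z_ab : z \in `]a, b[.
  by move: z_in; rewrite !in_itv /= => /andP[-> zbd] /=; lra.
by move/negP: (noroot z z_ab).
Qed.

Lemma resolvent_nonneg_roots a s b : r < a -> roots adj_prod a b = s -> a <= b ->
  mx_nonneg (invmx (b%:M - B)) -> mx_nonneg (invmx (a%:M - B)).
Proof.
move=> ra; elim/last_ind: s b => [|s y IHs] b rootsE ab Rb0.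
  exact: resolvent_nonneg_interval ab Rb0 (roots_nil adj_prod_neq0 rootsE).
move/eqP: rootsE; rewrite roots_rcons => /and5P[_ y_in /eqP rootsyb _ /eqP rootsay].
move: y_in; rewrite in_itv /= => /andP[ay yb].
apply: IHs rootsay (ltW ay) _.
exact: resolvent_nonneg_interval (lt_trans ra ay) (ltW yb) Rb0
  (roots_nil adj_prod_neq0 rootsyb).
Qed.

Lemma resolvent_nonneg t : r < t -> mx_nonneg (invmx (t%:M - B)).
Proof.
move=> rt; have [T rT RT0] := resolvent_nonneg_large.
apply: (@resolvent_nonneg_roots t _ (Num.max t T) rt erefl).
  by rewrite le_max lexx.
by apply: RT0; rewrite le_max lexx orbT.
Qed.

End Resolvent.

Lemma poly_mx_factor_root (F : fieldType) m n (M : 'M[{poly F}]_(m, n)) x :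
  M != 0 -> exists e (N : 'M[{poly F}]_(m, n)),
    M = ('X - x%:P) ^+ e *: N /\ exists i j, ~~ root (N i j) x.
Proof.
move=> /mx_neq0_entry[i1 [j1 Mij_neq0]]; pose q := 'X - x%:P.
pose dvd e := [forall i, forall j, q ^+ e %| M i j].
have dvd0 : exists e, dvd e.
  by exists 0%N; apply/forallP => i; apply/forallP => j; rewrite expr0 dvd1p.
have dvd_ub e : dvd e -> (e <= size (M i1 j1))%N.
  move=> /forallP/(_ i1)/forallP/(_ j1)/(dvdp_leq Mij_neq0).
  by rewrite size_exp_XsubC => /ltnW.
have [e dvd_e e_max] := ex_maxnP dvd0 dvd_ub.
have qe_dvd i j : q ^+ e %| M i j by move/forallP/(_ i)/forallP: dvd_e.
exists e, (\matrix_(i, j) (M i j %/ q ^+ e)); split.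
  by apply/matrixP => i j; rewrite !mxE mulrC divpK.
have : ~~ dvd e.+1 by apply/negP => /e_max; rewrite ltnn.
case/forallPn => i /forallPn[j not_dvd]; exists i, j; rewrite mxE.
apply: contra not_dvd => root_quot.
by rewrite -(divpK (qe_dvd i j)) exprS dvdp_mul ?dvdpp // dvdp_XsubCl.
Qed.

Lemma horner_ge0_right (R : rcfType) (p : {poly R}) x :
  (forall t, x < t -> 0 <= p.[t]) -> 0 <= p.[x].
Proof.
move=> p_ge0; rewrite leNgt; apply/negP => px_lt0.
have [d d_gt0 near_x] :
    exists2 d, 0 < d & forall y, `|y - x| < d -> `|p.[y] - p.[x]| < - p.[x].
  by apply: poly_cont; rewrite oppr_gt0.
have x_lt_xd : x < x + d / 2 by rewrite ltrDl divr_gt0.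
have := p_ge0 _ x_lt_xd; have := ler_norm (p.[x + d / 2] - p.[x]).
have : `|x + d / 2 - x| < d.
  by rewrite addrAC subrr add0r ger0_norm ?ltr_pdivrMr ?divr_ge0 ?ltW //; lra.
move/near_x; lra.
Qed.

Section PerronFrobenius.
Variables (R : rcfType) (k : nat) (B : 'M[R]_k).
Hypothesis B0 : mx_nonneg B.
Local Notation r := (spectral_radius B).
Local Notation cmx B := (map_mx (real_complex R) B).
Local Notation adjp := (\adj (char_poly_mx B)).

Lemma adj_char_poly_mx_neq0 : (0 < k)%N -> adjp != 0.
Proof.
move=> k_gt0; apply/eqP => adj0; have := mul_mx_adj (char_poly_mx B).
rewrite adj0 mulmx0 => /matrixP/(_ (Ordinal k_gt0) (Ordinal k_gt0)).
rewrite !mxE eqxx mulr1n => /esym/eqP.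
by rewrite (negPf (monic_neq0 (char_poly_monic B))).
Qed.

(* N is the adjugate of X - B, divided by the largest power (X - r)^e dividing
   all its entries, evaluated at r: a nonzero limit of the nonnegative matrices
   adj (t - B) / (t - r)^e as t decreases to r. *)
Lemma resolvent_limit : 0 < r ->
  exists (N : 'M[R]_k) (c : R), [/\ mx_nonneg N, N != 0, 0 <= c & (r%:M - B) *m N = c%:M].
Proof.
move=> r_gt0; have k_gt0 := spectral_radius_dim_gt0 r_gt0.
have [e [P [adjE [i0 [j0 Pr_neq0]]]]] :=
  poly_mx_factor_root r (adj_char_poly_mx_neq0 k_gt0).
set q := ('X - r%:P) ^+ e in adjE.
have q_neq0 : q != 0 by rewrite expf_neq0 // polyXsubC_eq0.
have q_gt0 t : r < t -> 0 < q.[t].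
  by move=> rt; rewrite horner_exp hornerXsubC exprn_gt0 // subr_gt0.
have cpmPE i j : q * (char_poly_mx B *m P) i j = char_poly B *+ (i == j).
  have /matrixP/(_ i j) := mul_mx_adj (char_poly_mx B).
  by rewrite adjE -scalemxAr !mxE.
pose c := (char_poly_mx B *m P) i0 i0.
have chiE : char_poly B = q * c by rewrite cpmPE eqxx.
have cpmP : char_poly_mx B *m P = c%:M.
  apply/matrixP => i j; apply: (mulfI q_neq0).
  by rewrite cpmPE mxE mulrnAr -chiE.
exists (map_mx (horner_eval r) P), c.[r]; split.
- move=> i j; rewrite mxE horner_evalE; apply: horner_ge0_right => t rt.
  have := resolvent_nonneg B0 rt i j.
  by rewrite resolvent_ge0E // adjE mxE hornerM pmulr_rge0 ?q_gt0.
- apply: contra Pr_neq0 => /eqP/matrixP/(_ i0 j0).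
  by rewrite !mxE horner_evalE /root => ->.
- apply: horner_ge0_right => t rt; apply: ltW.
  by have := char_poly_gt0 rt; rewrite chiE hornerM pmulr_rgt0 ?q_gt0.
- by rewrite -horner_char_poly_mx -map_mxM cpmP map_scalar_mx.
Qed.

Lemma eigenrow_norm_le (z : R[i]) (v : 'rV[R[i]]_k) j :
  v *m cmx B = z *: v -> `|z| * `|v 0 j| <= \sum_i `|v 0 i| * (B i j)%:C%C.
Proof.
move=> /matrixP/(_ 0 j); rewrite !mxE => vBj; rewrite -normrM -vBj.
apply: le_trans (ler_norm_sum _ _ _) _; apply: ler_sum => i _.
by rewrite normrM mxE [`|_%:C%C|]ger0_norm // ler0c.
Qed.

(* For a left eigenvector v for an eigenvalue of modulus r, the row |v| satisfies
   |v| (r - B) <= 0, hence |v| = |v| (r - B) Y <= 0. *)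
Lemma no_nonneg_rinv (Y : 'M[R]_k) :
  0 < r -> mx_nonneg Y -> ~ (r%:M - B) *m Y = 1%:M.
Proof.
move=> r_gt0 Y0 BY1; have [z] := spectral_radius_attained r_gt0.
rewrite -eigenvalue_root_char => /eigenvalueP[v vB v_neq0] zE.
have z_norm : `|z| = (r%:C)%C by rewrite -zE RRe_real ?normr_real.
pose a := \row_j `|v 0 j|.
have aBr_le0 j : (a *m cmx (r%:M - B)) 0 j <= 0.
  rewrite raddfB /= map_scalar_mx mulmxBr mul_mx_scalar !mxE subr_le0.
  rewrite -[X in X * _ <= _]/(r%:C)%C -z_norm.
  apply: le_trans (eigenrow_norm_le j vB) _.
  by apply: ler_sum => i _; rewrite !mxE.
have aE : a = a *m cmx (r%:M - B) *m cmx Y.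
  by rewrite -mulmxA -map_mxM BY1 map_mx1 mulmx1.
case/negP: v_neq0; apply/eqP/rowP => j; apply/eqP; rewrite mxE -normr_eq0.
have -> : `|v 0 j| = a 0 j by rewrite mxE.
rewrite eq_le; apply/andP; split; last by rewrite mxE normr_ge0.
rewrite aE mxE sumr_le0 // => l _.
by rewrite mulr_le0_ge0 // mxE ler0c.
Qed.

Lemma perron_frobenius : 0 < r ->
  exists w : 'cV_k, [/\ mx_nonneg w, w != 0 & B *m w = r *: w].
Proof.
move=> r_gt0; have [N [c [N0 N_neq0 c_ge0 NE]]] := resolvent_limit r_gt0.
move: c_ge0; rewrite le_eqVlt => /predU1P[c_eq0|c_gt0].
  have [i0 [j0 Nij]] := mx_neq0_entry N_neq0; exists (col j0 N); split.
  - by move=> i j; rewrite mxE.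
  - by apply: contraNneq Nij => /colP/(_ i0); rewrite !mxE => ->.
  - apply/eqP; rewrite eq_sym -subr_eq0 -mul_scalar_mx -mulmxBl -col_mulmx NE.
    by rewrite -c_eq0 raddf0 col0.
case: (no_nonneg_rinv (Y := c^-1 *: N)) => //.
  by move=> i j; rewrite mxE mulr_ge0 // invr_ge0 (ltW c_gt0).
by rewrite -scalemxAr NE scale_scalar_mx mulVf ?gt_eqF.
Qed.

End PerronFrobenius.

Lemma perron_frobenius_row (R : rcfType) k (B : 'M[R]_k) :
  mx_nonneg B -> 0 < spectral_radius B ->
  exists u : 'rV_k, [/\ mx_nonneg u, u != 0 & u *m B = spectral_radius B *: u].
Proof.
move=> B0; rewrite -spectral_radius_tr => rho_gt0.
have [w [w0 w_neq0 Bw]] := perron_frobenius (mx_nonneg_tr B0) rho_gt0.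
exists w^T; split; [exact: mx_nonneg_tr | by rewrite trmx_eq0 |].
by have := congr1 trmx Bw; rewrite trmx_mul trmxK linearZ /= spectral_radius_tr.
Qed.

(** * Proper weak regular splittings *)

Section GeneralizedInverse.
Variables (R : pzRingType) (m n : nat) (A : 'M[R]_(m, n)) (G : 'M[R]_(n, m)).
Hypothesis AGA : A *m G *m A = A.

Lemma mulmx_ginv_null p (M : 'M_(p, n)) :
  (forall x, in_null A x -> in_null M x) -> M *m G *m A = M.
Proof.
move=> NAM; suff: M *m (1%:M - G *m A) = 0.
  by rewrite mulmxBr mulmx1 mulmxA => /eqP; rewrite subr_eq0 => /eqP.
apply/col_matrixP => j; rewrite col_mulmx col0; apply: NAM.
by rewrite /in_null -col_mulmx mulmxBr mulmx1 mulmxA AGA subrr col0.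
Qed.

Lemma mulmx_ginv_range p (M : 'M_(m, p)) :
  (forall y, in_range M y -> in_range A y) -> A *m G *m M = M.
Proof.
move=> RMA; apply/col_matrixP => j; rewrite col_mulmx.
have [x ->] : in_range A (col j M).
  by apply: RMA; exists (col j 1%:M); rewrite -col_mulmx mulmx1.
by rewrite mulmxA AGA.
Qed.

End GeneralizedInverse.

Section ProperSplitting.
Variables (R : numDomainType) (m n : nat) (A U V : 'M[R]_(m, n)).
Variables (Ad Ud : 'M[R]_(n, m)).
Hypotheses (AUV : proper_splitting A U V).
Hypotheses (mpA : is_MP_inverse A Ad) (mpU : is_MP_inverse U Ud).

Lemma splitting_VUdU : V *m Ud *m U = V.
Proof.
case: AUV mpU => -> _ NUA [UUdU _ _ _]; apply: mulmx_ginv_null => // x Ux.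
have /NUA := Ux; rewrite /in_null mulmxBl Ux sub0r => /eqP.
by rewrite oppr_eq0 => /eqP.
Qed.

Lemma splitting_UUdV : U *m Ud *m V = V.
Proof.
case: AUV mpU => eA RUA _ [UUdU _ _ _]; apply: mulmx_ginv_range => // y [x ->].
have [z Az] : in_range U (A *m x) by apply/RUA; exists x.
by exists (x - z); rewrite mulmxBr -Az eA mulmxBl opprB addrCA subrr addr0.
Qed.

Lemma splitting_AAdU : A *m Ad *m U = U.
Proof.
by case: AUV mpA => _ RUA _ [AAdA _ _ _]; apply: mulmx_ginv_range => // y /RUA.
Qed.

Lemma splitting_UAdA : U *m Ad *m A = U.
Proof.
by case: AUV mpA => _ _ NUA [AAdA _ _ _]; apply: mulmx_ginv_null => // x /NUA.
Qed.

Lemma splitting_UdAAd : Ud *m A *m Ad = Ud.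
Proof.
case: mpU mpA => _ UdUUd UUdT _ [_ _ AAdT _].
have UdE : Ud = Ud *m Ud^T *m U^T by rewrite -mulmxA -trmx_mul UUdT mulmxA UdUUd.
have UTAAd : U^T *m (A *m Ad) = U^T by rewrite -{1}AAdT -trmx_mul splitting_AAdU.
by rewrite {1}UdE -!mulmxA UTAAd !mulmxA -UdE.
Qed.

Lemma splitting_AdAUd : Ad *m A *m Ud = Ud.
Proof.
case: mpU mpA => _ UdUUd _ UdUT [_ _ _ AdAT].
have UdE : Ud = U^T *m Ud^T *m Ud by rewrite -trmx_mul UdUT UdUUd.
have AdAUT : Ad *m A *m U^T = U^T by rewrite -{1}AdAT -trmx_mul mulmxA splitting_UAdA.
by rewrite {1}UdE !mulmxA AdAUT -UdE.
Qed.

End ProperSplitting.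

Section SplittingEigenvectors.
Variables (R : realFieldType) (m n : nat) (A U V : 'M[R]_(m, n)).
Variables (Ad Ud : 'M[R]_(n, m)).
Hypotheses (AUV : A = U - V) (Ud0 : mx_nonneg Ud) (Ad0 : mx_nonneg Ad).

Lemma eigenrow_UdV_AdV (u : 'rV_n) rho :
  V *m Ud *m U = V -> Ud *m A *m Ad = Ud ->
  mx_nonneg u -> u != 0 -> 0 < rho -> u *m (Ud *m V) = rho *: u ->
  rho < 1 /\ u *m (Ad *m V) = (rho / (1 - rho)) *: u.
Proof.
move=> VUdU UdAAd u0 u_neq0 rho_gt0; rewrite mulmxA => uUdV.
have rho_neq0 : rho != 0 by rewrite gt_eqF.
have uUdU : u *m Ud *m U = u.
  apply: (scalerI rho_neq0).
  by rewrite !scalemxAl -uUdV -!mulmxA (mulmxA V) VUdU.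
have uUd : u *m Ud = (1 - rho) *: (u *m Ad).
  by rewrite -UdAAd !mulmxA AUV mulmxBr uUdU uUdV mulmxBl -scalemxAl scalerBl scale1r.
have rho_lt1 : rho < 1.
  have uUd_neq0 : u *m Ud != 0.
    apply: contraNneq u_neq0 => uUd0.
    by apply/eqP/(scalerI rho_neq0); rewrite -uUdV uUd0 mul0mx scaler0.
  have [i [j]] := mx_nonneg_neq0_gt0 (mx_nonneg_mul u0 Ud0) uUd_neq0.
  rewrite uUd mxE => prod_gt0; rewrite -subr_gt0; apply: contraTT prod_gt0.
  by rewrite -!leNgt => rho_ge1; apply: mulr_le0_ge0 => //; apply: mx_nonneg_mul.
split=> //; have rho1_neq0 : 1 - rho != 0 by rewrite subr_eq0 gt_eqF.
apply: (scalerI rho1_neq0).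
by rewrite scalerA mulrCA divff // mulr1 mulmxA scalemxAl -uUd.
Qed.

End SplittingEigenvectors.

Lemma eigencol_VUd_VAd (R : realFieldType) m n (A U V : 'M[R]_(m, n))
    (Ad Ud : 'M[R]_(n, m)) (w : 'cV_m) rho :
  A = U - V -> mx_nonneg Ud -> mx_nonneg Ad ->
  U *m Ud *m V = V -> Ad *m A *m Ud = Ud ->
  mx_nonneg w -> w != 0 -> 0 < rho -> V *m Ud *m w = rho *: w ->
  rho < 1 /\ V *m Ad *m w = (rho / (1 - rho)) *: w.
Proof.
move=> AUV Ud0 Ad0 UUdV AdAUd w0 w_neq0 rho_gt0 VUdw.
have AUV' : A^T = U^T - V^T by rewrite AUV linearB.
have VUdU' : V^T *m Ud^T *m U^T = V^T by rewrite -!trmx_mul mulmxA UUdV.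
have UdAAd' : Ud^T *m A^T *m Ad^T = Ud^T by rewrite -!trmx_mul mulmxA AdAUd.
have wT_neq0 : w^T != 0 by rewrite trmx_eq0.
have wUdV : w^T *m (Ud^T *m V^T) = rho *: w^T by rewrite -!trmx_mul VUdw linearZ.
have [rho_lt1 wAdV] := eigenrow_UdV_AdV AUV' (mx_nonneg_tr Ud0) (mx_nonneg_tr Ad0)
  VUdU' UdAAd' (mx_nonneg_tr w0) wT_neq0 rho_gt0 wUdV.
split=> //; apply: trmx_inj.
by rewrite [RHS]linearZ /= -wAdV !trmx_mul.
Qed.

Section WeakRegularSplittings.
Variables (R : rcfType) (m n : nat) (A U V : 'M[R]_(m, n)) (Ad Ud : 'M[R]_(n, m)).
Hypotheses (mpA : is_MP_inverse A Ad) (Ad0 : mx_nonneg Ad).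
Local Notation rho := (spectral_radius (Ud *m V)).

Lemma pwr_I_eigenrow : pwr_splitting_I A U V Ud -> 0 < rho ->
  exists u : 'rV_n, [/\ mx_nonneg u, u != 0, rho < 1 &
    u *m (Ad *m V) = (rho / (1 - rho)) *: u].
Proof.
case=> AUV mpU Ud0 UdV0 rho_gt0; have AE : A = U - V by case: AUV.
have [u [u0 u_neq0 uUdV]] := perron_frobenius_row UdV0 rho_gt0.
have [rho_lt1 uAdV] := eigenrow_UdV_AdV AE Ud0 Ad0 (splitting_VUdU AUV mpU)
  (splitting_UdAAd AUV mpA mpU) u0 u_neq0 rho_gt0 uUdV.
by exists u.
Qed.

Lemma pwr_II_eigencol : pwr_splitting_II A U V Ud -> 0 < rho ->
  exists w : 'cV_m, [/\ mx_nonneg w, w != 0, rho < 1 &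
    V *m Ad *m w = (rho / (1 - rho)) *: w].
Proof.
case=> AUV mpU Ud0 VUd0; rewrite spectral_radius_mulC => rho_gt0.
have AE : A = U - V by case: AUV.
have [w [w0 w_neq0 VUdw]] := perron_frobenius VUd0 rho_gt0.
have [rho_lt1 wAdV] := eigencol_VUd_VAd AE Ud0 Ad0 (splitting_UUdV AUV mpU)
  (splitting_AdAUd AUV mpA mpU) w0 w_neq0 rho_gt0 VUdw.
by exists w.
Qed.

End WeakRegularSplittings.

Lemma ltr_odds (R : realFieldType) (x y : R) :
  x < 1 -> y < 1 -> (x / (1 - x) < y / (1 - y)) = (x < y).
Proof.
move=> x_lt1 y_lt1; rewrite ltr_pdivrMr ?subr_gt0 // mulrAC ltr_pdivlMr ?subr_gt0 //.
by rewrite !mulrBr !mulr1 mulrC ltrD2r.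
Qed.

Lemma lt_of_eigen_forms (R : realFieldType) m n (u : 'rV[R]_n)
    (A1d A2d : 'M[R]_(n, m)) (w : 'cV[R]_m) (rho1 rho2 : R) :
  mx_nonneg u -> u != 0 -> mx_nonneg w -> w != 0 ->
  mx_gt A2d A1d -> mx_nonneg A1d -> 0 < rho1 -> rho1 < 1 -> rho2 < 1 ->
  (rho1 / (1 - rho1)) *: (u *m A2d *m w) = (rho2 / (1 - rho2)) *: (u *m A1d *m w) ->
  rho1 < rho2.
Proof.
move=> u0 u_neq0 w0 w_neq0 A21 A1d0 rho1_gt0 rho1_lt1 rho2_lt1 /matrixP/(_ 0 0).
rewrite -(ltr_odds rho1_lt1 rho2_lt1) [LHS]mxE [RHS]mxE.
have : 0 < rho1 / (1 - rho1) by rewrite divr_gt0 // subr_gt0.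
set mu1 := rho1 / (1 - rho1); set mu2 := rho2 / (1 - rho2).
have := mx_nonneg_mul (mx_nonneg_mul u0 A1d0) w0 0 0.
have D_gt0 i j : 0 < (A2d - A1d) i j by rewrite !mxE subr_gt0.
have := bilinear_gt0 u0 u_neq0 w0 w_neq0 D_gt0.
rewrite mulmxBr mulmxBl [X in 0 < X]mxE [X in 0 < _ + X]mxE subr_gt0; nra.
Qed.

Theorem theorem3p11 (R : rcfType) (m n : nat)
    (A1 A2 U1 U2 V : 'M[R]_(m, n))
    (A1d A2d U1d U2d : 'M[R]_(n, m)) :
  is_MP_inverse A1 A1d -> is_MP_inverse A2 A2d ->
  (pwr_splitting_I A1 U1 V U1d /\ pwr_splitting_II A2 U2 V U2d \/
   pwr_splitting_II A1 U1 V U1d /\ pwr_splitting_I A2 U2 V U2d) ->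
  0 < spectral_radius (U1d *m V) ->
  0 < spectral_radius (U2d *m V) ->
  V != 0 ->
  mx_gt A2d A1d -> mx_nonneg A1d ->
  spectral_radius (U1d *m V) < spectral_radius (U2d *m V) /\
  spectral_radius (U2d *m V) < 1.
Proof.
(* V != 0 is implied by 0 < rho1. *)
move=> mpA1 mpA2 splittings rho1_gt0 rho2_gt0 _ A21 A1d0.
have A2d0 : mx_nonneg A2d by move=> i j; apply: ltW (le_lt_trans (A1d0 i j) (A21 i j)).
set rho1 := spectral_radius (U1d *m V) in rho1_gt0 *.
set rho2 := spectral_radius (U2d *m V) in rho2_gt0 *.
suff [u [w [[u0 u_neq0] [w0 w_neq0] rho1_lt1 rho2_lt1 forms]]] :
    exists (u : 'rV_n) (w : 'cV_m), [/\ mx_nonneg u /\ u != 0, mx_nonneg w /\ w != 0,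
      rho1 < 1, rho2 < 1 & (rho1 / (1 - rho1)) *: (u *m A2d *m w) =
                           (rho2 / (1 - rho2)) *: (u *m A1d *m w)].
  split; last exact: rho2_lt1.
  exact: lt_of_eigen_forms u0 u_neq0 w0 w_neq0 A21 A1d0 rho1_gt0 rho1_lt1 rho2_lt1 forms.
case: splittings => [[sI1 sII2]|[sII1 sI2]].
- have [u [u0 u_neq0 rho1_lt1 uAV]] := pwr_I_eigenrow mpA1 A1d0 sI1 rho1_gt0.
  have [w [w0 w_neq0 rho2_lt1 VAw]] := pwr_II_eigencol mpA2 A2d0 sII2 rho2_gt0.
  exists u, w; split; [exact: conj u0 u_neq0 | exact: conj w0 w_neq0 |
                       exact: rho1_lt1 | exact: rho2_lt1 |].
  by rewrite [RHS]scalemxAr -VAw !scalemxAl -uAV !mulmxA.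
- have [w [w0 w_neq0 rho1_lt1 VAw]] := pwr_II_eigencol mpA1 A1d0 sII1 rho1_gt0.
  have [u [u0 u_neq0 rho2_lt1 uAV]] := pwr_I_eigenrow mpA2 A2d0 sI2 rho2_gt0.
  exists u, w; split; [exact: conj u0 u_neq0 | exact: conj w0 w_neq0 |
                       exact: rho1_lt1 | exact: rho2_lt1 |].
  by rewrite [LHS]scalemxAr -VAw !scalemxAl -uAV !mulmxA.
Qed.
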